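(* Let $\Gamma$ be a $\mathbb{Z}^d$-periodic graph with fundamental domain $W$. If an operator on $\Gamma$ has finitely many critical points, then its critical point degree is at least $2^d|W|$.
   Context: A $\mathbb{Z}^d$-periodic graph $\Gamma$ is a simple undirected graph with bounded vertex degrees together with a free action of $\mathbb{Z}^d$ by graph automorphisms, written $(\alpha,v)\mapsto \alpha+v$, having finitely many orbits on vertices and on edges. Write $u\sim v$ if $\{u,v\}$ is an edge. A fundamental domain $W$ is a set of vertices containing exactly one vertex of each $\mathbb{Z}^d$-orbit. An operator on $\Gamma$ is given by $\mathbb{Z}^d$-periodic real-valued functions $e$ on edges (edge weights, $e_{(u,v)}=e_{(v,u)}$) and $V$ on vertices (potential). For $z\in(\mathbb{C}^\times)^d$ and $\alpha\in\mathbb{Z}^d$ put $z^\alpha=z_1^{\alpha_1}\cdots z_d^{\alpha_d}$. The Floquet matrix $H(z)$ is the $W\times W$ matrix whose $(v,u)$ entry is $\delta_{v,u}V(v)-\sum_{\alpha\in\mathbb{Z}^d:\ v\sim \alpha+u} e_{(v,\alpha+u)}z^\alpha$. The dispersion polynomial is $\Phi(z,\lambda)=\det(\lambda I_W-H(z))$. A critical point of the operator is a solution $(z,\lambda)\in(\mathbb{C}^\times)^d\times\mathbb{C}$ of the system (the critical point equations) $\Phi=z_1\frac{\partial\Phi}{\partial z_1}=\cdots=z_d\frac{\partial \Phi}{\partial z_d}=0$. The critical point degree of the operator is the number of critical points counted with multiplicity (as points of the zero-dimensional solution scheme), and is defined to be $0$ if there are infinitely many critical points. *)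

From HB Require Import structures.
From mathcomp Require Import all_boot all_order all_algebra.
From mathcomp Require Import reals.
From mathcomp Require Import complex.
From mathcomp Require Import mpoly.

Set Implicit Arguments.
Unset Strict Implicit.
Unset Printing Implicit Defensive.

Import Order.TTheory GRing.Theory Num.Theory.
Local Open Scope ring_scope.

(* Z^d-periodic graphs.  Z^d is 'rV[int]_d; the action is
   (alpha, v) |-> act alpha v (written alpha + v in the paper).        *)
Section PeriodicGraph.
Variables (d : nat) (V : Type) (adj : V -> V -> Prop)
          (act : 'rV[int]_d -> V -> V).

Definition periodic_graph : Prop :=
  (forall u v, adj u v -> adj v u) /\
  (forall v, ~ adj v v) /\
  (* bounded vertex degrees: no vertex has D+1 distinct neighbours *)
  (exists D : nat, forall v (f : 'I_D.+1 -> V), (forall k, adj v (f k)) ->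
      exists k1 k2, k1 <> k2 /\ f k1 = f k2) /\
  (forall v, act 0 v = v) /\
  (forall a b v, act (a + b) v = act a (act b v)) /\
  (forall a u v, adj u v <-> adj (act a u) (act a v)) /\
  (forall a v, act a v = v -> a = 0) /\
  (exists m (f : 'I_m -> V), forall v, exists i a, v = act a (f i)) /\
  (* finitely many orbits on (unordered) edges *)
  (exists m (g : 'I_m -> V * V), (forall k, adj (g k).1 (g k).2) /\
     forall u v, adj u v -> exists k a,
       (u = act a (g k).1 /\ v = act a (g k).2) \/
       (u = act a (g k).2 /\ v = act a (g k).1)).

(* W : 'I_n -> V is a fundamental domain: it contains exactly one vertex
   of each orbit; its cardinality |W| is n. *)
Definition fundamental_domain (n : nat) (W : 'I_n -> V) : Prop :=
  (forall v, exists i a, v = act a (W i)) /\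
  (forall i j a b, act a (W i) = act b (W j) -> i = j).

Definition neighbor_enum (n : nat) (W : 'I_n -> V)
    (nb : 'I_n -> 'I_n -> seq 'rV[int]_d) : Prop :=
  forall i j, uniq (nb i j) /\
    forall a, a \in nb i j <-> adj (W i) (act a (W j)).

Definition periodic_operator (R : realType) (e : V -> V -> R) (pot : V -> R)
    : Prop :=
  (forall u v, e u v = e v u) /\
  (forall a u v, e (act a u) (act a v) = e u v) /\
  (forall a v, pot (act a v) = pot v).

End PeriodicGraph.

(* Laurent polynomials in z_1..z_d, lambda are encoded in the polynomial
   ring C[z_1..z_d, w_1..w_d, lambda] (N = 2d+1 variables) modulo the
   relations z_i w_i = 1 (w_i stands for z_i^{-1}).                     *)
Section Floquet.
Variables (R : realType) (d : nat).
Local Notation C := (R[i]).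
Local Notation N := (d + d).+1.
Local Notation P := {mpoly C[N]}.

Definition zv (i : 'I_d) : 'I_N := inord i.
Definition wv (i : 'I_d) : 'I_N := inord (d + i).
Definition lv : 'I_N := inord (d + d).

Definition zmono (a : 'rV[int]_d) : P :=
  \prod_(i < d) (if (0 <= a ord0 i)%R then 'X_(zv i) ^+ `|a ord0 i|%N
                 else 'X_(wv i) ^+ `|a ord0 i|%N).

Definition cst (r : R) : P := ((r%:C)%C)%:MP.

Variables (V : Type) (act : 'rV[int]_d -> V -> V) (n : nat) (W : 'I_n -> V)
          (nb : 'I_n -> 'I_n -> seq 'rV[int]_d) (e : V -> V -> R) (pot : V -> R).

Definition floquet : 'M[P]_n :=
  \matrix_(i, j) ((i == j)%:R * cst (pot (W i))
      - \sum_(a <- nb i j) cst (e (W i) (act a (W j))) * zmono a).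

Definition dispersion : P := \det ((('X_lv : P)%:M) - floquet).

(* the Euler derivation z_i d/dz_i (acting on the Laurent ring) *)
Definition euler (i : 'I_d) (p : P) : P :=
  'X_(zv i) * mderiv (zv i) p - 'X_(wv i) * mderiv (wv i) p.

(* the point (z, z^{-1}, lambda) *)
Definition pt (z : 'rV[C]_d) (l : C) (j : 'I_N) : C :=
  if insub (val j) is Some i then z ord0 i
  else if insub (val j - d)%N is Some i then (z ord0 i)^-1 else l.

Definition critical_point (z : 'rV[C]_d) (l : C) : Prop :=
  (forall i, z ord0 i != 0) /\
  dispersion.@[pt z l] = 0 /\
  (forall i, (euler i dispersion).@[pt z l] = 0).

Definition finitely_many_critical_points : Prop :=
  exists s : seq ('rV[C]_d * C),
    forall z l, critical_point z l -> (z, l) \in s.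

Definition in_critical_ideal (f : P) : Prop :=
  exists (c : P) (a b : 'I_d -> P),
    f = c * dispersion + \sum_(i < d) a i * euler i dispersion
        + \sum_(i < d) b i * ('X_(zv i) * 'X_(wv i) - 1).

(* "critical point degree >= k": the coordinate ring of the (zero-dimensional)
   critical point scheme has C-dimension at least k, i.e. it contains k
   C-linearly independent classes. *)
Definition critical_degree_ge (k : nat) : Prop :=
  exists fs : 'I_k -> P, forall c : 'I_k -> C,
    in_critical_ideal (\sum_(j < k) c j *: fs j) -> forall j, c j = 0.

End Floquet.

From HB Require Import structures.
From mathcomp Require Import all_boot all_order all_algebra.
From mathcomp Require Import reals complex mpoly.
From mathcomp Require Import fingroup perm zify.
Set Implicit Arguments.
Unset Strict Implicit.
Unset Printing Implicit Defensive.
Import Order.TTheory GRing.Theory Num.Theory.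
Local Open Scope ring_scope.

(* Idea: H(z^-1) = H(z)^T, so Phi is invariant under z |-> z^-1 and the
   derivatives dPhi/dz_i and dPhi/d(z_i^-1) agree wherever z = z^-1.  Hence at
   each of the 2^d corners z in {1, -1}^d every Euler derivative z_i dPhi/dz_i
   vanishes, and evaluating at the corner maps the critical ideal into the
   multiples of Phi(z, lambda), a polynomial of degree |W| in lambda.  If
   delta_s is a polynomial in z equal to 1 at the corner s and to 0 at the other
   corners, the 2^d |W| polynomials delta_s lambda^k (k < |W|) are therefore
   linearly independent modulo the critical ideal. *)

Section MPolyPerm.
Variables (k : nat) (R : nzRingType).

Lemma msymC (s : 'S_k) c : msym s (c%:MP : {mpoly R[k]}) = c%:MP.
Proof. exact: mmapC. Qed.

Lemma msymXU (s : 'S_k) j : msym s ('X_j : {mpoly R[k]}) = 'X_(s j).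
Proof. by rewrite /msym mmapX mmap1U. Qed.

Lemma mderiv_msym (s : 'S_k) j (p : {mpoly R[k]}) :
  mderiv j (msym s p) = msym s (mderiv (s^-1 j)%g p).
Proof.
apply/mpolyP => m; rewrite mcoeff_mderiv !mcoeff_sym mcoeff_mderiv !mnmE permKV.
congr (_ *+ _); congr (mcoeff _ p); apply/mnmP => i; rewrite !mnmE.
by congr (_ + _)%N; rewrite -{1}(permKV s j) (inj_eq perm_inj).
Qed.

Variables (S : comNzRingType) (f : {rmorphism R -> S}).

Lemma mmap_msym (h : 'I_k -> S) (s : 'S_k) (p : {mpoly R[k]}) :
  mmap f h (msym s p) = mmap f (h \o s) p.
Proof.
elim/mpolyind: p => [|c m p _ _ ih]; first by rewrite msym0 !mmap0.
rewrite msymD !mmapD ih msymZ !mmapZ msymX !mmapX; congr (_ * _ + _).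
rewrite /mmap1 (reindex_inj (@perm_inj _ s)) /=.
by apply: eq_bigr => i _; rewrite mnmE permK.
Qed.

Lemma mmap_eq (h1 h2 : 'I_k -> S) (p : {mpoly R[k]}) :
  h1 =1 h2 -> mmap f h1 p = mmap f h2 p.
Proof. by move=> eh; apply: eq_bigr => m _; rewrite (mmap1_eq _ eh). Qed.

End MPolyPerm.

Lemma rmorph_det_tr (R : comPzRingType) (f : {rmorphism R -> R}) m (A : 'M[R]_m) :
  map_mx f A = A^T -> f (\det A) = \det A.
Proof. by move=> fA; rewrite -det_map_mx fA det_tr. Qed.

Lemma dvdp_size_lt_eq0 (F : fieldType) (p q : {poly F}) :
  q %| p -> (size p < size q)%N -> p = 0.
Proof. by move=> q_dvd_p; apply: contraTeq => p_neq0; rewrite -leqNgt dvdp_leq. Qed.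

Lemma size_sum_scaleXn_leq (F : fieldType) n (c : 'I_n -> F) :
  (size (\sum_(k < n) c k *: 'X^k)%R <= n)%N.
Proof.
apply: leq_trans (size_sum _ _ _) _; apply/bigmax_leqP => k _.
by rewrite (leq_trans (size_scale_leq _ _)) // size_polyXn.
Qed.

Section CriticalDegree.
Variables (R : realType) (d : nat) (V : Type)
  (act : 'rV[int]_d -> V -> V) (n : nat) (W : 'I_n -> V)
  (nb : 'I_n -> 'I_n -> seq 'rV[int]_d) (e : V -> V -> R) (pot : V -> R).
Local Notation C := (R[i]).
Local Notation P := {mpoly C[(d + d).+1]}.

Lemma critical_degree_ge_card (I : finType) (fs : I -> P) :
  (forall c : I -> C,
     in_critical_ideal act W nb e pot (\sum_i c i *: fs i) -> forall i, c i = 0) ->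
  critical_degree_ge act W nb e pot #|I|.
Proof.
move=> fs_free; exists (fs \o enum_val) => c c_crit j.
rewrite -(enum_valK j); apply: (fs_free (c \o enum_rank)) => /=.
move: c_crit; rewrite (reindex (@enum_rank I)) /=; last first.
  by apply: onW_bij; exact: enum_rank_bij.
by under eq_bigr do rewrite enum_rankK.
Qed.

End CriticalDegree.

Section LaurentVariables.
Variables (R : realType) (d : nat).
Local Notation C := (R[i]).
Local Notation N := (d + d).+1.
Local Notation P := {mpoly C[N]}.

Lemma val_zv (i : 'I_d) : zv i = i :> nat.
Proof. by rewrite inordK //; have := ltn_ord i; lia. Qed.

Lemma val_wv (i : 'I_d) : wv i = (d + i)%N :> nat.
Proof. by rewrite inordK //; have := ltn_ord i; lia. Qed.

Lemma val_lv : lv d = (d + d)%N :> nat.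
Proof. by rewrite inordK. Qed.

Lemma var_cases (j : 'I_N) :
  [\/ exists i, j = zv i, exists i, j = wv i | j = lv d].
Proof.
have := ltn_ord j; case: (ltnP j d) => [j_lt_d | d_le_j] j_lt_N.
  by apply: Or31; exists (Ordinal j_lt_d); apply: val_inj; rewrite /= val_zv.
case: (ltnP j (d + d)) => [j_lt_dd | dd_le_j].
  have jd : (j - d < d)%N by lia.
  by apply: Or32; exists (Ordinal jd); apply: val_inj; rewrite /= val_wv /=; lia.
by apply: Or33; apply: val_inj; rewrite /= val_lv; lia.
Qed.

Definition zw_swap_fun (j : 'I_N) : 'I_N :=
  inord (if j < d then j + d else if j < d + d then j - d else j)%N.

Lemma val_zw_swap_fun (j : 'I_N) :
  zw_swap_fun j = (if j < d then j + d else if j < d + d then j - d else j)%N :> nat.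
Proof. by rewrite inordK //; have := ltn_ord j; repeat case: ifP; lia. Qed.

Lemma zw_swap_funK : involutive zw_swap_fun.
Proof.
move=> j; apply: val_inj; have := ltn_ord j.
by rewrite /= !val_zw_swap_fun; repeat case: ifP; lia.
Qed.

Definition zw_swap : 'S_N := perm (can_inj zw_swap_funK).

Lemma zw_swap_zv i : zw_swap (zv i) = wv i.
Proof.
by apply: val_inj; rewrite /= permE val_zw_swap_fun val_zv val_wv ltn_ord addnC.
Qed.

Lemma zw_swap_wv i : zw_swap (wv i) = zv i.
Proof. by rewrite -zw_swap_zv !permE zw_swap_funK. Qed.

Lemma zw_swap_lv : zw_swap (lv d) = lv d.
Proof.
apply: val_inj; rewrite /= permE val_zw_swap_fun val_lv ltnn.
by rewrite ltnNge leq_addr.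
Qed.

Lemma msym_zw_swap_zmono a : msym zw_swap (zmono R a) = zmono R (- a).
Proof.
rewrite rmorph_prod; apply: eq_bigr => i _; rewrite mxE abszN oppr_ge0.
have [a_ge0 | a_lt0] := boolP (0 <= a ord0 i);
  have [a_le0 | a_gt0] := boolP (a ord0 i <= 0);
  rewrite rmorphXn /= msymXU ?zw_swap_zv ?zw_swap_wv //.
- by have -> : a ord0 i = 0 by lia.
- by lia.
Qed.

Definition sgnb (b : bool) : C := if b then 1 else -1.

Lemma sgnb_mul_self b : sgnb b * sgnb b = 1.
Proof. by case: b; rewrite /sgnb ?mulr1 ?mulrNN ?mulr1. Qed.

Lemma sgnb_indicator b b' : 2^-1 * (1 + sgnb b * sgnb b') = (b == b')%:R.
Proof.
have two_unit : (2 : C) \is a GRing.unit by rewrite unitfE pnatr_eq0.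
case: b; case: b'; rewrite /sgnb /= ?mulr1 ?mul1r ?mulrNN ?mulr1 ?subrr ?mulr0 //.
all: by rewrite ?opprK -[1 + 1]/(2 : C) mulVr.
Qed.

(* Substitution of the corner z = s in {1, -1}^d into the Laurent ring, with
   lambda kept as the variable of {poly C}. *)
Definition corner (s : {ffun 'I_d -> bool}) (j : 'I_N) : {poly C} :=
  if insub (j : nat) is Some i then (sgnb (s i))%:P
  else if insub (j - d)%N is Some i then (sgnb (s i))%:P else 'X.

Definition corner_indicator (t : {ffun 'I_d -> bool}) : P :=
  \prod_k ((2^-1 : C)%:MP * (1 + (sgnb (t k))%:MP * 'X_(zv k))).

Definition corner_mono (t : {ffun 'I_d -> bool}) (a : 'rV[int]_d) : C :=
  \prod_k sgnb (t k) ^+ `|a ord0 k|.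

Variable s : {ffun 'I_d -> bool}.

Lemma corner_zv i : corner s (zv i) = (sgnb (s i))%:P.
Proof. by rewrite /corner val_zv valK. Qed.

Lemma corner_wv i : corner s (wv i) = (sgnb (s i))%:P.
Proof. by rewrite /corner val_wv insubN -?leqNgt ?leq_addr // addKn valK. Qed.

Lemma corner_lv : corner s (lv d) = 'X.
Proof. by rewrite /corner val_lv insubN -?leqNgt ?leq_addr // addKn insubN // ltnn. Qed.

Lemma corner_zw_swap : corner s \o zw_swap =1 corner s.
Proof.
move=> j /=; case: (var_cases j) => [[i ->] | [i ->] | ->].
- by rewrite zw_swap_zv corner_zv corner_wv.
- by rewrite zw_swap_wv corner_zv corner_wv.
- by rewrite zw_swap_lv.
Qed.

Local Notation corner_eval := (mmap (@polyC C) (corner s)).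

Lemma corner_evalX j : corner_eval ('X_j : P) = corner s j.
Proof. by rewrite mmapX mmap1U. Qed.

Lemma corner_eval_cst r : corner_eval (cst d r) = (r%:C)%C%:P.
Proof. exact: mmapC. Qed.

Lemma corner_eval_zmono a : corner_eval (zmono R a) = (corner_mono s a)%:P.
Proof.
rewrite !rmorph_prod; apply: eq_bigr => k _.
by case: ifP => _; rewrite !rmorphXn /= corner_evalX ?corner_zv ?corner_wv.
Qed.

Lemma corner_eval_euler i (p : P) :
  msym zw_swap p = p -> corner_eval (euler i p) = 0.
Proof.
move=> p_sym.
have deriv_zw : corner_eval (mderiv (wv i) p) = corner_eval (mderiv (zv i) p).
  by rewrite -{1}p_sym mderiv_msym mmap_msym -(zw_swap_zv i) permK
    (mmap_eq _ _ corner_zw_swap).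
by rewrite /euler rmorphB /= !rmorphM /= !corner_evalX corner_zv corner_wv deriv_zw subrr.
Qed.

Lemma corner_eval_zw_inverse i : corner_eval ('X_(zv i) * 'X_(wv i) - 1 : P) = 0.
Proof.
rewrite rmorphB rmorphM /= !corner_evalX corner_zv corner_wv -polyCM.
by rewrite sgnb_mul_self polyC1 rmorph1 subrr.
Qed.

Lemma corner_eval_indicator t : corner_eval (corner_indicator t) = (t == s)%:R.
Proof.
rewrite rmorph_prod /=.
under eq_bigr do rewrite rmorphM rmorphD rmorphM /= !mmapC corner_evalX corner_zv
  -polyCM -polyCD -polyCM sgnb_indicator.
have [<- | t_ne_s] := eqVneq t s; first by rewrite big1 // => k _; rewrite eqxx.
have [k t_ne_s_k] : exists k, t k != s k.
  apply/existsP; apply: contraNT t_ne_s => /existsPn ts.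
  by apply/eqP/ffunP => k; apply/eqP/negPn/ts.
by rewrite (bigD1 k) //= (negbTE t_ne_s_k) polyC0 mul0r.
Qed.

End LaurentVariables.

Section FloquetAtCorners.
Variables (R : realType) (d : nat) (V : Type) (adj : V -> V -> Prop)
  (act : 'rV[int]_d -> V -> V) (n : nat) (W : 'I_n -> V)
  (nb : 'I_n -> 'I_n -> seq 'rV[int]_d) (e : V -> V -> R) (pot : V -> R).
Local Notation C := (R[i]).
Local Notation P := {mpoly C[(d + d).+1]}.
Local Notation F := (floquet act W nb e pot).
Local Notation Phi := (dispersion act W nb e pot).
Local Notation corner_eval s := (mmap (@polyC C) (corner R s)).
Local Notation corner_pt := ({ffun 'I_d -> bool} * 'I_n)%type.

Hypothesis adj_sym : forall u v, adj u v -> adj v u.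
Hypothesis act0 : forall v, act 0 v = v.
Hypothesis actD : forall a b v, act (a + b) v = act a (act b v).
Hypothesis adj_act : forall a u v, adj u v <-> adj (act a u) (act a v).
Hypothesis nbP : neighbor_enum adj act W nb.
Hypothesis eP : periodic_operator act e pot.

Lemma actNK a v : act (- a) (act a v) = v.
Proof. by rewrite -actD addNr act0. Qed.

Lemma perm_nb_opp i j : perm_eq (nb j i) (map -%R (nb i j)).
Proof.
have [uniq_ji nb_ji] := nbP j i; have [uniq_ij nb_ij] := nbP i j.
apply: uniq_perm => //; first by rewrite (map_inj_uniq oppr_inj).
move=> b; rewrite -[b in RHS]opprK (mem_map oppr_inj).
apply/idP/idP => [/nb_ji | /nb_ij] adj_b; [apply/nb_ij | apply/nb_ji].
- by apply: adj_sym; move/(adj_act (- b)): adj_b; rewrite actNK.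
- by apply/(adj_act (- b)); rewrite actNK; apply: adj_sym.
Qed.

Lemma e_actN i j a : e (W j) (act (- a) (W i)) = e (W i) (act a (W j)).
Proof.
have [e_sym [e_act _]] := eP.
by rewrite -(e_act (- a) (W i) (act a (W j))) actNK e_sym.
Qed.

Lemma msym_floquet i j : msym (zw_swap d) (F i j) = F j i.
Proof.
rewrite !mxE /cst rmorphB rmorphM /= rmorph_nat msymC rmorph_sum /=.
congr (_ - _); first by have [-> | _] := eqVneq i j; rewrite ?mul0r.
rewrite (perm_big _ (perm_nb_opp i j)) big_map; apply: eq_bigr => a _.
by rewrite rmorphM /= msymC msym_zw_swap_zmono e_actN.
Qed.

Lemma msym_dispersion : msym (zw_swap d) Phi = Phi.
Proof.
apply: rmorph_det_tr; rewrite map_mxB /= map_scalar_mx /= msymXU zw_swap_lv.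
rewrite linearB /= tr_scalar_mx; congr (_ - _).
by apply/matrixP => i j; rewrite [LHS]mxE [RHS]mxE msym_floquet.
Qed.

Definition corner_floquet (s : {ffun 'I_d -> bool}) : 'M[C]_n :=
  \matrix_(i, j) ((i == j)%:R * (pot (W i))%:C
      - \sum_(a <- nb i j) (e (W i) (act a (W j)))%:C * corner_mono R s a)%C.

Lemma corner_eval_dispersion s : corner_eval s Phi = char_poly (corner_floquet s).
Proof.
rewrite -det_map_mx; congr (\det _); apply/matrixP => i j.
rewrite !mxE rmorphB rmorphMn /= corner_evalX corner_lv.
rewrite rmorphB rmorphM /= rmorph_nat corner_eval_cst !rmorph_sum /=.
rewrite rmorphB rmorphM /= rmorph_nat; congr (_ - (_ - _)).
rewrite [RHS]rmorph_sum; apply: eq_bigr => a _.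
by rewrite rmorphM /= corner_eval_cst corner_eval_zmono rmorphM.
Qed.

Lemma char_poly_dvd_corner_eval s f : in_critical_ideal act W nb e pot f ->
  char_poly (corner_floquet s) %| corner_eval s f.
Proof.
case=> c [a [b ->]].
have euler_eq0 : corner_eval s (\sum_(i < d) a i * euler i Phi) = 0.
  rewrite rmorph_sum big1 // => i _.
  by rewrite rmorphM /= corner_eval_euler ?mulr0 ?msym_dispersion.
have inverse_eq0 : corner_eval s (\sum_(i < d) b i * ('X_(zv i) * 'X_(wv i) - 1)) = 0.
  by rewrite rmorph_sum big1 // => i _; rewrite rmorphM /= corner_eval_zw_inverse mulr0.
rewrite !rmorphD /= euler_eq0 inverse_eq0 !addr0 rmorphM /= corner_eval_dispersion.
exact: dvdp_mull.
Qed.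

Definition corner_family (x : corner_pt) : P :=
  corner_indicator R x.1 * 'X_(lv d) ^+ x.2.

Lemma corner_eval_family s (c : corner_pt -> C) :
  corner_eval s (\sum_x c x *: corner_family x) = \sum_(k < n) c (s, k) *: 'X^k.
Proof.
pose G t k := corner_eval s (c (t, k) *: corner_family (t, k)).
rewrite rmorph_sum (eq_bigr (fun x => G x.1 x.2)) => [|[] //].
rewrite -pair_bigA (bigD1 s) //= [X in _ + X]big1 ?addr0 => [|t t_ne_s]; last first.
  apply: big1 => k _; rewrite /G /corner_family /= mmapZ rmorphM /=.
  by rewrite corner_eval_indicator (negbTE t_ne_s) mul0r mulr0.
apply: eq_bigr => k _; rewrite /G /corner_family /= mmapZ rmorphM rmorphXn /=.
by rewrite corner_eval_indicator eqxx corner_evalX corner_lv mul1r mul_polyC.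
Qed.

Lemma corner_family_free (c : corner_pt -> C) :
  in_critical_ideal act W nb e pot (\sum_x c x *: corner_family x) ->
  forall x, c x = 0.
Proof.
move=> c_crit [s k].
have eval_eq0 : \sum_(k < n) c (s, k) *: 'X^k = 0.
  apply: (dvdp_size_lt_eq0 (q := char_poly (corner_floquet s))).
    by rewrite -corner_eval_family char_poly_dvd_corner_eval.
  by rewrite size_char_poly ltnS size_sum_scaleXn_leq.
have := congr1 (fun p : {poly C} => p`_k) eval_eq0.
by rewrite coef_sumMXn coef0 (big_pred1 k) // => k'; rewrite /= -val_eqE.
Qed.

End FloquetAtCorners.

Theorem corollary1p8 (R : realType) (d : nat) (V : Type)
    (adj : V -> V -> Prop) (act : 'rV[int]_d -> V -> V)
    (n : nat) (W : 'I_n -> V) (nb : 'I_n -> 'I_n -> seq 'rV[int]_d)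
    (e : V -> V -> R) (pot : V -> R) :
  periodic_graph adj act ->
  fundamental_domain act W ->
  neighbor_enum adj act W nb ->
  periodic_operator act e pot ->
  finitely_many_critical_points act W nb e pot ->
  critical_degree_ge act W nb e pot (2 ^ d * n).
Proof.
move=> [adj_sym [_ [_ [act0 [actD [adj_act _]]]]]] _ nbP eP _.
have <- : #|{: {ffun 'I_d -> bool} * 'I_n}| = (2 ^ d * n)%N.
  by rewrite card_prod card_ffun card_bool !card_ord.
exact: critical_degree_ge_card (corner_family_free adj_sym act0 actD adj_act nbP eP).
Qed.
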